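(* Let $p\ge1$ and $n>p$ be integers, and let $\Lambda\in\mathbb R$. Let $z\not\equiv0$ be a real even eigenfunction of order $n$ with eigenvalue $\Lambda$. Then: 1. $\Lambda>0$. 2. Put $\lambda^2=\Lambda^{1/p}>0$, and for $-1\le k\le n-p-1$ set $$h^k=(-1)^kL^{2n-2k-2}(\Lambda)z.$$ In particular $h^{-1}=-L^{2n}(\Lambda)z=0$ and $h^0=c$ is the constant $L^{2n-2}(\Lambda)z$. Then for every integer $k$ with $0\le k\le n-p-1$, $$(-1)^{k-1}\int_{-1}^1 z\,h^{k-1}\,dx-(-1)^k\lambda^2\int_{-1}^1 z\,h^{k}\,dx>0 .$$ 3. In particular (the case $k=0$), $c\int_{-1}^1 z\,dx<0$.
   Context: Fix an integer $p\ge1$. For an integer $k\ge p$ and real $\Lambda$, the differential operator on $[-1,1]$ is $$L^{2k}(\Lambda)=(-1)^k\frac{d^{2k}}{dx^{2k}}-\Lambda(-1)^{k-p}\frac{d^{2k-2p}}{dx^{2k-2p}}.$$ A real function $z\in C^{2n}[-1,1]$, $z\not\equiv0$, is an eigenfunction of order $n$ with eigenvalue $\Lambda$ if: - $L^{2n}(\Lambda)z=0$ on $[-1,1]$, and - $z^{(j)}(\pm1)=0$ for $j=0,\dots,n-1$. *)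

From Stdlib Require Import Reals ZArith Lra.
Open Scope R_scope.

Definition derive_within (a b : R) (f f' : R -> R) : Prop :=
  forall x, a <= x <= b -> forall eps, 0 < eps ->
    exists delta, 0 < delta /\
      forall h, h <> 0 -> Rabs h < delta -> a <= x + h <= b ->
        Rabs ((f (x + h) - f x) / h - f' x) < eps.

Definition cont_within (a b : R) (f : R -> R) : Prop :=
  forall x, a <= x <= b -> forall eps, 0 < eps ->
    exists delta, 0 < delta /\
      forall y, a <= y <= b -> Rabs (y - x) < delta -> Rabs (f y - f x) < eps.

Definition Cm_derivs (m : nat) (z : R -> R) (D : nat -> R -> R) : Prop :=
  (forall x, D 0%nat x = z x) /\
  (forall j, (j < m)%nat -> derive_within (-1) 1 (D j) (D (S j))) /\
  cont_within (-1) 1 (D m).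

(* (L^{2m}(Lam) z)(x) = (-1)^m z^(2m)(x) - Lam (-1)^(m-p) z^(2m-2p)(x), m >= p,
   with D the family of derivatives of z. *)
Definition Lop (p : nat) (Lam : R) (D : nat -> R -> R) (m : nat) (x : R) : R :=
  (-1) ^ m * D (2 * m)%nat x - Lam * (-1) ^ (m - p) * D (2 * m - 2 * p)%nat x.

Definition eigen_with (p n : nat) (Lam : R) (z : R -> R) (D : nat -> R -> R) : Prop :=
  Cm_derivs (2 * n) z D /\
  (forall x, -1 <= x <= 1 -> Lop p Lam D n x = 0) /\
  (forall j, (j < n)%nat -> D j (-1) = 0 /\ D j 1 = 0) /\
  (exists x, -1 <= x <= 1 /\ z x <> 0).

Definition is_eigenfunction (p n : nat) (Lam : R) (z : R -> R) : Prop :=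
  exists D, eigen_with p n Lam z D.

Definition is_even_on_I (z : R -> R) : Prop :=
  forall x, -1 <= x <= 1 -> z (- x) = z x.

Definition hfun (p n : nat) (Lam : R) (D : nat -> R -> R) (k : Z) (x : R) : R :=
  powerRZ (-1) k * Lop p Lam D (Z.to_nat (Z.of_nat n - k - 1)) x.

From Stdlib Require Import Reals ZArith Lra Lia Classical.
From Coquelicot Require Import Coquelicot.
Open Scope R_scope.

(* Write E_j for the integral of (z^(j))^2 over [-1, 1]. Integrating by parts against the
   boundary conditions gives  int z L^{2m}(Lam) z = E_m - Lam E_{m-p}  for p <= m <= n, so
   L^{2n}(Lam) z = 0 forces E_n = Lam E_{n-p}, and Lam > 0 because every E_j (j <= n) is
   positive. With mu = Lam^{1/p}, positivity of  int (z^(j+2) + mu z^(j))^2  reads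
   E_{j+2} - 2 mu E_{j+1} + mu^2 E_j > 0 (strictly, since otherwise
   (z^(j+1))^2 + mu (z^(j))^2 would be a first integral vanishing at the boundary), i.e.
   u_j = E_{j+1} - mu E_j satisfies u_{j+1} > mu u_j. Iterating this p times is exactly the
   inequality between the integrals of z h^{k-1} and z h^k. For k = 0, evenness makes the
   derivative of L^{2n-2}(Lam) z an odd constant, hence zero, so h^0 = c and the inequality
   becomes c int z < 0. *)

(* Coquelicot integral equalities live in [NormedModule.sort _], which [ring] does not accept as [R]. *)
Ltac ring_R := match goal with |- ?u = ?v => change (@eq R u v); ring end.

Section Interval.

Context {a b : R} (Hab : a < b).

Lemma derive_within_sub c d f f' : a <= c -> d <= b ->
  derive_within a b f f' -> derive_within c d f f'.
Proof.
  intros Hc Hd Hf x Hx eps Heps.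
  destruct (Hf x ltac:(lra) eps Heps) as [delta [Hdelta Hq]].
  exists delta; split; [exact Hdelta|]. intros h Hh0 Hh Hxh. apply Hq; auto; lra.
Qed.

Lemma derive_within_ext f g f' g' : derive_within a b f f' ->
  (forall x, a <= x <= b -> f x = g x) -> (forall x, a <= x <= b -> f' x = g' x) ->
  derive_within a b g g'.
Proof.
  intros Hf Efg Efg' x Hx eps Heps.
  destruct (Hf x Hx eps Heps) as [delta [Hdelta Hq]].
  exists delta; split; [exact Hdelta|]. intros h Hh0 Hh Hxh.
  rewrite <- !Efg, <- Efg' by auto. auto.
Qed.

Definition clamp (y : R) : R := Rmax a (Rmin b y).

Lemma clamp_id y : a <= y <= b -> clamp y = y.
Proof. intros. unfold clamp, Rmax, Rmin; repeat destruct Rle_dec; lra. Qed.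

Lemma clamp_in y : a <= clamp y <= b.
Proof. unfold clamp, Rmax, Rmin; repeat destruct Rle_dec; lra. Qed.

Lemma clamp_lipschitz x y : Rabs (clamp x - clamp y) <= Rabs (x - y).
Proof.
  unfold clamp, Rmax, Rmin; repeat destruct Rle_dec; unfold Rabs;
    repeat destruct Rcase_abs; lra.
Qed.

Lemma cont_within_continuity_clamp f :
  cont_within a b f -> forall x, continuity_pt (fun y => f (clamp y)) x.
Proof.
  intros Hf x eps Heps.
  destruct (Hf (clamp x) (clamp_in x) eps Heps) as [delta [Hdelta Hy]].
  exists delta; split; [exact Hdelta|]. intros y [_ Hxy]; simpl in *; unfold R_dist in *.
  apply Hy; [apply clamp_in|]. eapply Rle_lt_trans; [apply clamp_lipschitz|exact Hxy].
Qed.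

Lemma cont_within_of_continuity_pt f g :
  (forall x, a <= x <= b -> continuity_pt g x) -> (forall x, a <= x <= b -> g x = f x) ->
  cont_within a b f.
Proof.
  intros Hg Egf x Hx eps Heps.
  destruct (Hg x Hx eps Heps) as [delta [Hdelta Hy]].
  exists delta; split; [exact Hdelta|]. intros y Hyab Hxy.
  destruct (Req_dec y x) as [->|Hne]; [rewrite Rminus_diag, Rabs_R0; exact Heps|].
  rewrite <- (Egf y Hyab), <- (Egf x Hx). apply Hy. repeat split; auto.
Qed.

Lemma cont_within_ext f g :
  cont_within a b f -> (forall x, a <= x <= b -> f x = g x) -> cont_within a b g.
Proof.
  intros Hf Efg. apply (cont_within_of_continuity_pt _ (fun y => f (clamp y))).
  - intros; apply cont_within_continuity_clamp, Hf.
  - intros. rewrite clamp_id; auto.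
Qed.

Lemma cont_within_plus f g :
  cont_within a b f -> cont_within a b g -> cont_within a b (fun x => f x + g x).
Proof.
  intros Hf Hg. apply (cont_within_of_continuity_pt _ (fun y => f (clamp y) + g (clamp y))).
  - intros; apply continuity_pt_plus; apply cont_within_continuity_clamp; auto.
  - intros. rewrite clamp_id; auto.
Qed.

Lemma cont_within_mult f g :
  cont_within a b f -> cont_within a b g -> cont_within a b (fun x => f x * g x).
Proof.
  intros Hf Hg. apply (cont_within_of_continuity_pt _ (fun y => f (clamp y) * g (clamp y))).
  - intros; apply continuity_pt_mult; apply cont_within_continuity_clamp; auto.
  - intros. rewrite clamp_id; auto.
Qed.

Lemma cont_within_const c : cont_within a b (fun _ => c).
Proof.
  intros x _ eps Heps. exists 1; split; [lra|].
  intros. rewrite Rminus_diag, Rabs_R0; exact Heps.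
Qed.

Lemma cont_within_scal c f : cont_within a b f -> cont_within a b (fun x => c * f x).
Proof. intros; apply cont_within_mult; auto using cont_within_const. Qed.

Lemma ex_RInt_cont_within f c d : a <= c -> c <= d -> d <= b ->
  cont_within a b f -> ex_RInt f c d.
Proof.
  intros Hc Hcd Hd Hf. apply (ex_RInt_ext (fun y => f (clamp y))).
  - intros x Hx. rewrite Rmin_left, Rmax_right in Hx by lra. rewrite clamp_id; auto; lra.
  - apply (@ex_RInt_continuous R_CompleteNormedModule). intros.
    apply continuity_pt_filterlim, cont_within_continuity_clamp, Hf.
Qed.

Definition extend (f f' : R -> R) (x : R) : R :=
  if Rlt_dec x a then f a + f' a * (x - a)
  else if Rlt_dec b x then f b + f' b * (x - b) else f x.

Lemma extend_id f f' x : a <= x <= b -> extend f f' x = f x.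
Proof. intros; unfold extend; do 2 (destruct Rlt_dec; [lra|]); reflexivity. Qed.

Lemma derivable_pt_lim_of_within g g' x r : derive_within a b g g' -> a <= x <= b -> 0 < r ->
  (forall h, h <> 0 -> Rabs h < r -> ~ (a <= x + h <= b) -> (g (x + h) - g x) / h = g' x) ->
  derivable_pt_lim g x (g' x).
Proof.
  intros Hg Hx Hr Hout eps Heps.
  destruct (Hg x Hx eps Heps) as [delta [Hdelta Hq]].
  assert (Hmin : 0 < Rmin delta r) by (apply Rmin_glb_lt; lra).
  exists (mkposreal _ Hmin); simpl. intros h Hh0 Hh.
  assert (Hhd : Rabs h < delta) by (eapply Rlt_le_trans; [exact Hh|apply Rmin_l]).
  assert (Hhr : Rabs h < r) by (eapply Rlt_le_trans; [exact Hh|apply Rmin_r]).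
  destruct (Rle_dec a (x + h)); [destruct (Rle_dec (x + h) b)|].
  - apply Hq; auto.
  - rewrite Hout by (auto; lra). rewrite Rminus_diag, Rabs_R0; exact Heps.
  - rewrite Hout by (auto; lra). rewrite Rminus_diag, Rabs_R0; exact Heps.
Qed.

Lemma derive_within_extend f f' : derive_within a b f f' ->
  forall x, a <= x <= b -> derivable_pt_lim (extend f f') x (f' x).
Proof.
  intros Hf x Hx.
  assert (Hext : derive_within a b (extend f f') f')
    by (apply (derive_within_ext f _ f' f'); auto; intros; rewrite extend_id; auto).
  destruct (Req_dec x a) as [->|Hxa]; [|destruct (Req_dec x b) as [->|Hxb]].
  - apply (derivable_pt_lim_of_within _ _ _ (b - a)); auto; [lra|].
    intros h Hh0 Hh Hout. assert (h < 0).
    { destruct (Rlt_or_le h 0); auto. rewrite Rabs_right in Hh by lra.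
      exfalso; apply Hout; lra. }
    rewrite (extend_id _ _ a) by lra. unfold extend. destruct Rlt_dec; [|lra]. field; auto.
  - apply (derivable_pt_lim_of_within _ _ _ (b - a)); auto; [lra|].
    intros h Hh0 Hh Hout. assert (0 < h).
    { destruct (Rlt_or_le 0 h); auto. rewrite Rabs_left1 in Hh by lra.
      exfalso; apply Hout; lra. }
    rewrite (extend_id _ _ b) by lra. unfold extend.
    destruct Rlt_dec; [lra|]. destruct Rlt_dec; [|lra]. field; auto.
  - apply (derivable_pt_lim_of_within _ _ _ (Rmin (x - a) (b - x))); auto.
    + apply Rmin_glb_lt; lra.
    + intros h _ Hh Hout. exfalso; apply Hout.
      assert (Rabs h < x - a) by (eapply Rlt_le_trans; [exact Hh|apply Rmin_l]).
      assert (Rabs h < b - x) by (eapply Rlt_le_trans; [exact Hh|apply Rmin_r]).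
      unfold Rabs in *; destruct Rcase_abs; lra.
Qed.


Lemma derive_within_of_pt_lim f g f' :
  (forall x, a <= x <= b -> g x = f x) ->
  (forall x, a <= x <= b -> derivable_pt_lim g x (f' x)) -> derive_within a b f f'.
Proof.
  intros Egf Hg x Hx eps Heps.
  destruct (Hg x Hx eps Heps) as [delta Hq].
  exists delta; split; [apply cond_pos|]. intros h Hh0 Hh Hxh.
  rewrite <- !Egf by auto. auto.
Qed.

Lemma derive_within_cont_within f f' : derive_within a b f f' -> cont_within a b f.
Proof.
  intros Hf. apply (cont_within_of_continuity_pt _ (extend f f')).
  - intros x Hx. apply (derivable_continuous_pt _ x (exist _ _ (derive_within_extend _ _ Hf x Hx))).
  - apply extend_id.
Qed.

Lemma derive_within_lincomb c d f g f' g' :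
  derive_within a b f f' -> derive_within a b g g' ->
  derive_within a b (fun x => c * f x + d * g x) (fun x => c * f' x + d * g' x).
Proof.
  intros Hf Hg. apply (derive_within_of_pt_lim _ (fun x => c * extend f f' x + d * extend g g' x)).
  - intros. rewrite !extend_id; auto.
  - intros x Hx. apply derivable_pt_lim_plus; apply derivable_pt_lim_scal;
      apply derive_within_extend; auto.
Qed.

Lemma derive_within_scal c f f' : derive_within a b f f' ->
  derive_within a b (fun x => c * f x) (fun x => c * f' x).
Proof.
  intros Hf. apply (derive_within_of_pt_lim _ (fun x => c * extend f f' x)).
  - intros. rewrite extend_id; auto.
  - intros x Hx. apply derivable_pt_lim_scal, derive_within_extend; auto.
Qed.

Lemma derive_within_mult f g f' g' :
  derive_within a b f f' -> derive_within a b g g' ->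
  derive_within a b (fun x => f x * g x) (fun x => f' x * g x + f x * g' x).
Proof.
  intros Hf Hg. apply (derive_within_of_pt_lim _ (fun x => extend f f' x * extend g g' x)).
  - intros. rewrite !extend_id; auto.
  - intros x Hx.
    replace (f' x * g x + f x * g' x) with (f' x * extend g g' x + extend f f' x * g' x)
      by (rewrite !extend_id; auto).
    apply derivable_pt_lim_mult; apply derive_within_extend; auto.
Qed.

Lemma RInt_derive_within F f :
  derive_within a b F f -> cont_within a b f -> RInt f a b = F b - F a.
Proof.
  intros HF Hf. apply is_RInt_unique.
  apply (is_RInt_ext (fun y => f (clamp y))).
  - intros x Hx. rewrite Rmin_left, Rmax_right in Hx by lra. rewrite clamp_id; auto; lra.
  - rewrite <- (extend_id F f a), <- (extend_id F f b) by lra.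
    apply (@is_RInt_derive R_CompleteNormedModule).
    + intros x Hx. rewrite Rmin_left, Rmax_right in Hx by lra.
      rewrite clamp_id by lra. apply is_derive_Reals, derive_within_extend; auto.
    + intros. apply continuity_pt_filterlim, cont_within_continuity_clamp, Hf.
Qed.

Lemma RInt_scal_R f c : ex_RInt f a b -> RInt (fun x => c * f x) a b = c * RInt f a b.
Proof. apply (@RInt_scal R_CompleteNormedModule). Qed.

Lemma RInt_lincomb f g c d : ex_RInt f a b -> ex_RInt g a b ->
  RInt (fun x => c * f x + d * g x) a b = c * RInt f a b + d * RInt g a b.
Proof.
  intros Hf Hg. apply is_RInt_unique.
  apply (is_RInt_plus (fun x => c * f x) (fun x => d * g x)).
  - apply (is_RInt_scal f a b c), (@RInt_correct R_CompleteNormedModule), Hf.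
  - apply (is_RInt_scal g a b d), (@RInt_correct R_CompleteNormedModule), Hg.
Qed.

Lemma RInt_mult_derive_swap f g f' g' :
  derive_within a b f f' -> derive_within a b g g' ->
  cont_within a b f' -> cont_within a b g' -> f b * g b = f a * g a ->
  RInt (fun x => f x * g' x) a b = - RInt (fun x => f' x * g x) a b.
Proof.
  intros Hf Hg Hf' Hg' Hbd.
  assert (Hfc := derive_within_cont_within _ _ Hf).
  assert (Hgc := derive_within_cont_within _ _ Hg).
  assert (Hint : forall u v, cont_within a b u -> cont_within a b v ->
    ex_RInt (fun x => u x * v x) a b)
    by (intros; apply (ex_RInt_cont_within _ a b); try lra; apply cont_within_mult; auto).
  assert (HFTC := RInt_derive_within _ _ (derive_within_mult _ _ _ _ Hf Hg)
    (cont_within_plus _ _ (cont_within_mult _ _ Hf' Hgc) (cont_within_mult _ _ Hfc Hg'))).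
  rewrite (RInt_ext _ (fun x => 1 * (f' x * g x) + 1 * (f x * g' x))) in HFTC
    by (intros; ring_R).
  rewrite RInt_lincomb in HFTC by auto. lra.
Qed.

Lemma RInt_gt_0_cont_within f : cont_within a b f ->
  (forall x, a <= x <= b -> 0 <= f x) -> ~ (forall x, a <= x <= b -> f x = 0) ->
  0 < RInt f a b.
Proof.
  intros Hf Hnn Hnz.
  destruct (not_all_ex_not _ _ Hnz) as [x0 Hx0].
  apply imply_to_and in Hx0 as [Hx0 Hfx0].
  assert (Hpos : 0 < f x0) by (specialize (Hnn x0 Hx0); lra).
  destruct (Hf x0 Hx0 (f x0 / 2) ltac:(lra)) as [delta [Hdelta Hnear]].
  set (c := Rmax a (x0 - delta / 2)). set (d := Rmin b (x0 + delta / 2)).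
  assert (Hc : a <= c <= x0 /\ x0 - delta / 2 <= c)
    by (unfold c, Rmax; destruct Rle_dec; lra).
  assert (Hd : x0 <= d <= b /\ d <= x0 + delta / 2)
    by (unfold d, Rmin; destruct Rle_dec; lra).
  assert (Hcd : c < d) by (unfold c, d, Rmax, Rmin; repeat destruct Rle_dec; lra).
  assert (Hex : forall u v, a <= u -> u <= v -> v <= b -> ex_RInt f u v)
    by (intros; apply ex_RInt_cont_within; auto).
  rewrite <- (RInt_Chasles f a c b), <- (RInt_Chasles f c d b) by (apply Hex; lra).
  assert (0 <= RInt f a c) by (apply RInt_ge_0; [lra|apply Hex; lra|intros; apply Hnn; lra]).
  assert (0 <= RInt f d b) by (apply RInt_ge_0; [lra|apply Hex; lra|intros; apply Hnn; lra]).
  assert (Hmid : RInt (fun _ => f x0 / 2) c d <= RInt f c d).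
  { apply RInt_le; [lra|apply ex_RInt_const|apply Hex; lra|].
    intros x Hx. assert (Hfx : Rabs (f x - f x0) < f x0 / 2)
      by (apply Hnear; [lra|unfold Rabs; destruct Rcase_abs; lra]).
    unfold Rabs in Hfx; destruct Rcase_abs in Hfx; lra. }
  rewrite RInt_const in Hmid.
  assert (0 < (d - c) * (f x0 / 2)) by (apply Rmult_lt_0_compat; lra).
  unfold scal, plus in *; simpl in *; unfold mult in *; simpl in *. lra.
Qed.

Lemma derive_within_unique f f1 f2 x : derive_within a b f f1 -> derive_within a b f f2 ->
  a <= x <= b -> f1 x = f2 x.
Proof.
  intros H1 H2 Hx.
  destruct (Req_dec (f1 x) (f2 x)) as [|Hne]; [assumption|exfalso].
  set (eps := Rabs (f1 x - f2 x) / 2).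
  assert (Heps : 0 < eps) by (apply Rdiv_lt_0_compat; [apply Rabs_pos_lt; lra|lra]).
  destruct (H1 x Hx eps Heps) as [d1 [Hd1 Hq1]].
  destruct (H2 x Hx eps Heps) as [d2 [Hd2 Hq2]].
  set (r := Rmin (Rmin d1 d2) (b - a) / 2).
  assert (Hr : 0 < r /\ r < d1 /\ r < d2 /\ r <= (b - a) / 2).
  { unfold r, Rmin; repeat destruct Rle_dec; lra. }
  set (h := if Rle_dec x ((a + b) / 2) then r else - r).
  assert (Hh : Rabs h = r /\ a <= x + h <= b).
  { unfold h; destruct Rle_dec;
      [rewrite Rabs_right|rewrite Rabs_Ropp, Rabs_right]; repeat split; lra. }
  assert (Hh0 : h <> 0) by (intros E; rewrite E, Rabs_R0 in Hh; lra).
  specialize (Hq1 h Hh0 ltac:(lra) ltac:(tauto)).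
  specialize (Hq2 h Hh0 ltac:(lra) ltac:(tauto)).
  set (q := (f (x + h) - f x) / h) in *.
  assert (Rabs (f1 x - f2 x) <= Rabs (q - f2 x) + Rabs (q - f1 x)).
  { replace (f1 x - f2 x) with ((q - f2 x) + - (q - f1 x)) by ring.
    rewrite <- (Rabs_Ropp (q - f1 x)). apply Rabs_triang. }
  unfold eps in *; lra.
Qed.

End Interval.

Lemma derive_within_zero_const a b f : derive_within a b f (fun _ => 0) ->
  forall x, a <= x <= b -> f x = f b.
Proof.
  intros Hf x Hx. destruct (Req_dec x b) as [->|Hxb]; [reflexivity|].
  assert (Hxb' : x < b) by lra.
  assert (HFTC := RInt_derive_within Hxb' f (fun _ => 0)
    (derive_within_sub x b f _ (proj1 Hx) (Rle_refl b) Hf) (cont_within_const (a := x) (b := b) 0)).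
  rewrite RInt_const in HFTC. unfold scal in HFTC; simpl in HFTC; unfold mult in HFTC; simpl in HFTC.
  lra.
Qed.

Lemma derive_within_reflect a b f f' : derive_within a b f f' ->
  derive_within (- b) (- a) (fun x => f (- x)) (fun x => - f' (- x)).
Proof.
  intros Hf x Hx eps Heps.
  destruct (Hf (- x) ltac:(lra) eps Heps) as [delta [Hdelta Hq]].
  exists delta; split; [exact Hdelta|]. intros h Hh0 Hh Hxh.
  specialize (Hq (- h) ltac:(lra) ltac:(rewrite Rabs_Ropp; exact Hh) ltac:(lra)).
  replace ((f (- (x + h)) - f (- x)) / h - - f' (- x))
    with (- ((f (- x + - h) - f (- x)) / - h - f' (- x))).
  - rewrite Rabs_Ropp. exact Hq.
  - replace (- (x + h)) with (- x + - h) by ring. field; exact Hh0.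
Qed.

Lemma growth_iterate (u : nat -> R) (mu : R) (M : nat) : 0 < mu ->
  (forall j, (S j <= M)%nat -> mu * u j < u (S j)) ->
  forall t i, (0 < t)%nat -> (i + t <= M)%nat -> mu ^ t * u i < u (i + t)%nat.
Proof.
  intros Hmu Hstep. induction t as [|t IH]; intros i Ht HiM; [lia|].
  destruct (Nat.eq_dec t 0) as [->|Ht0].
  - rewrite pow_1, Nat.add_1_r. apply Hstep; lia.
  - assert (Hlt := IH i ltac:(lia) ltac:(lia)).
    assert (Hnext := Hstep (i + t)%nat ltac:(lia)).
    rewrite Nat.add_succ_r. simpl.
    assert (mu * (mu ^ t * u i) < mu * u (i + t)%nat) by (apply Rmult_lt_compat_l; auto).
    lra.
Qed.

Lemma Rpower_inv_INR_pow x k : 0 < x -> (0 < k)%nat -> Rpower x (/ INR k) ^ k = x.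
Proof.
  intros Hx Hk. rewrite <- Rpower_pow by apply exp_pos.
  rewrite Rpower_mult, Rinv_l by (apply not_0_INR; lia). apply Rpower_1, Hx.
Qed.

Lemma pow_m1_sqr k : (-1) ^ k * (-1) ^ k = 1.
Proof. rewrite <- Rpow_mult_distr. replace (-1 * -1) with 1 by ring. apply pow1. Qed.

Lemma powerRZ_m1_sqr k : powerRZ (-1) k * powerRZ (-1) k = 1.
Proof.
  rewrite <- powerRZ_mult. replace (-1 * -1) with 1 by ring. apply powerRZ_R1.
Qed.

Lemma derive_within_Lop a b p Lam D m : a < b ->
  derive_within a b (D (2 * m)%nat) (D (S (2 * m))) ->
  derive_within a b (D (2 * m - 2 * p)%nat) (D (S (2 * m - 2 * p))) ->
  derive_within a b (Lop p Lam D m) (Lop p Lam (fun j => D (S j)) m).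
Proof.
  intros Hab H1 H2. unfold Lop.
  apply (derive_within_ext _ _ _ _ (derive_within_lincomb Hab ((-1) ^ m) (- (Lam * (-1) ^ (m - p))) _ _ _ _ H1 H2));
    intros; ring.
Qed.

Lemma Lop_shift2 p Lam D m x : (p <= m)%nat ->
  Lop p Lam (fun j => D (S (S j))) m x = - Lop p Lam D (S m) x.
Proof.
  intros Hpm. unfold Lop.
  replace (S (S (2 * m))) with (2 * S m)%nat by lia.
  replace (S (S (2 * m - 2 * p))) with (2 * S m - 2 * p)%nat by lia.
  replace (S m - p)%nat with (S (m - p)) by lia. simpl. ring.
Qed.

Section Eigenfunction.

Variables (p n : nat) (Lam : R) (z : R -> R) (D : nat -> R -> R).
Hypothesis Heig : eigen_with p n Lam z D.

Let I_nondegenerate : -1 < 1.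
Proof. lra. Qed.

Lemma D_0 x : D 0%nat x = z x.
Proof. apply Heig. Qed.

Lemma D_derive j : (j < 2 * n)%nat -> derive_within (-1) 1 (D j) (D (S j)).
Proof. apply Heig. Qed.

Lemma D_boundary j : (j < n)%nat -> D j (-1) = 0 /\ D j 1 = 0.
Proof. apply Heig. Qed.

Lemma D_cont j : (j <= 2 * n)%nat -> cont_within (-1) 1 (D j).
Proof.
  intros Hj. destruct (Nat.eq_dec j (2 * n)) as [->|Hne]; [apply Heig|].
  apply (derive_within_cont_within I_nondegenerate _ (D (S j))), D_derive. lia.
Qed.

Lemma z_cont : cont_within (-1) 1 z.
Proof. apply (cont_within_ext I_nondegenerate (D 0%nat)); [apply D_cont; lia|intros; apply D_0]. Qed.

Lemma Lop_cont m : (m <= n)%nat -> cont_within (-1) 1 (Lop p Lam D m).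
Proof.
  intros Hm.
  apply (cont_within_ext I_nondegenerate (fun x => (-1) ^ m * D (2 * m)%nat x
    + - (Lam * (-1) ^ (m - p)) * D (2 * m - 2 * p)%nat x)).
  - apply (cont_within_plus I_nondegenerate); apply (cont_within_scal I_nondegenerate);
      apply D_cont; lia.
  - intros; unfold Lop; ring.
Qed.

Lemma Lop_n_zero x : -1 <= x <= 1 -> Lop p Lam D n x = 0.
Proof. apply Heig. Qed.

Lemma ex_RInt_D_mult i j : (i <= 2 * n)%nat -> (j <= 2 * n)%nat ->
  ex_RInt (fun x => D i x * D j x) (-1) 1.
Proof.
  intros Hi Hj. apply (ex_RInt_cont_within I_nondegenerate); try lra.
  apply (cont_within_mult I_nondegenerate); apply D_cont; assumption.
Qed.

Definition energy (j : nat) : R := RInt (fun x => D j x * D j x) (-1) 1.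

Lemma RInt_D_mult_shift i j : (i < n)%nat -> (j < 2 * n)%nat ->
  RInt (fun x => D i x * D (S j) x) (-1) 1 = - RInt (fun x => D (S i) x * D j x) (-1) 1.
Proof.
  intros Hi Hj. apply (RInt_mult_derive_swap I_nondegenerate);
    try (apply D_derive; lia); try (apply D_cont; lia).
  destruct (D_boundary i Hi) as [-> ->]. ring.
Qed.

Lemma RInt_D0_D_even m : (m <= n)%nat ->
  RInt (fun x => D 0%nat x * D (2 * m)%nat x) (-1) 1 = (-1) ^ m * energy m.
Proof.
  intros Hm.
  assert (Hshift : forall i, (i <= m)%nat -> RInt (fun x => D 0%nat x * D (2 * m)%nat x) (-1) 1
    = (-1) ^ i * RInt (fun x => D i x * D (2 * m - i)%nat x) (-1) 1).
  { induction i as [|i IH]; intros Hi.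
    - rewrite Nat.sub_0_r, pow_O, Rmult_1_l. reflexivity.
    - rewrite IH by lia. replace (2 * m - i)%nat with (S (2 * m - S i)) by lia.
      rewrite RInt_D_mult_shift by lia. simpl. ring. }
  rewrite (Hshift m) by lia. replace (2 * m - m)%nat with m by lia. reflexivity.
Qed.

Lemma RInt_z_Lop m : (p <= m <= n)%nat ->
  RInt (fun x => z x * Lop p Lam D m x) (-1) 1 = energy m - Lam * energy (m - p).
Proof.
  intros Hm.
  rewrite (RInt_ext _ (fun x => (-1) ^ m * (D 0%nat x * D (2 * m)%nat x)
    + - (Lam * (-1) ^ (m - p)) * (D 0%nat x * D (2 * (m - p))%nat x))).
  - rewrite RInt_lincomb, !RInt_D0_D_even by (try apply ex_RInt_D_mult; lia).
    transitivity ((-1) ^ m * (-1) ^ m * energy m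
      - Lam * ((-1) ^ (m - p) * (-1) ^ (m - p)) * energy (m - p)); [ring_R|].
    rewrite !pow_m1_sqr. ring_R.
  - intros x _. unfold Lop. rewrite D_0.
    replace (2 * m - 2 * p)%nat with (2 * (m - p))%nat by lia. ring_R.
Qed.

Lemma D_vanish_pred i : (i < n)%nat -> (forall x, -1 <= x <= 1 -> D (S i) x = 0) ->
  forall x, -1 <= x <= 1 -> D i x = 0.
Proof.
  intros Hi Hvan x Hx.
  rewrite (derive_within_zero_const (-1) 1 (D i)); [apply D_boundary, Hi| |exact Hx].
  apply (derive_within_ext (D i) (D i) (D (S i)) (fun _ => 0)); auto.
  apply D_derive. lia.
Qed.

Lemma D_not_vanish j : (j <= n)%nat -> ~ (forall x, -1 <= x <= 1 -> D j x = 0).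
Proof.
  induction j as [|j IH]; intros Hj Hvan.
  - destruct Heig as (_ & _ & _ & x & Hx & Hzx). apply Hzx. rewrite <- D_0. auto.
  - apply IH; [lia|]. apply D_vanish_pred; [lia|exact Hvan].
Qed.

Lemma energy_pos j : (j <= n)%nat -> 0 < energy j.
Proof.
  intros Hj. apply (RInt_gt_0_cont_within I_nondegenerate).
  - apply (cont_within_mult I_nondegenerate); apply D_cont; lia.
  - intros x _. apply Rle_0_sqr.
  - intros Hvan. apply (D_not_vanish j Hj). intros x Hx.
    destruct (Rmult_integral _ _ (Hvan x Hx)); assumption.
Qed.

Lemma energy_balance : (p <= n)%nat -> energy n = Lam * energy (n - p).
Proof.
  intros Hpn. assert (HL := RInt_z_Lop n ltac:(lia)).
  rewrite (RInt_ext _ (fun _ => 0)), RInt_const in HL.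
  - unfold scal in HL; simpl in HL; unfold mult in HL; simpl in HL. lra.
  - intros x Hx. rewrite Rmin_left, Rmax_right in Hx by lra.
    rewrite Lop_n_zero by lra. ring_R.
Qed.

Lemma Lam_pos : (p <= n)%nat -> 0 < Lam.
Proof.
  intros Hpn. assert (Hbal := energy_balance Hpn).
  assert (Hn := energy_pos n (le_n n)). assert (Hnp := energy_pos (n - p) ltac:(lia)).
  nra.
Qed.

Lemma D_combination_not_vanish mu j : 0 < mu -> (S (S j) <= n)%nat ->
  ~ (forall x, -1 <= x <= 1 -> D (S (S j)) x + mu * D j x = 0).
Proof.
  intros Hmu Hj Hvan. apply (D_not_vanish j ltac:(lia)). intros x Hx.
  (* D_(j+1)^2 + mu D_j^2 is a first integral of D_(j+2) + mu D_j = 0 *)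
  set (Q := fun y => 1 * (D (S j) y * D (S j) y) + mu * (D j y * D j y)).
  assert (HQ : derive_within (-1) 1 Q (fun _ => 0)).
  { apply (derive_within_ext _ _ _ _ (derive_within_lincomb I_nondegenerate 1 mu _ _ _ _
      (derive_within_mult I_nondegenerate _ _ _ _ (D_derive (S j) ltac:(lia)) (D_derive (S j) ltac:(lia)))
      (derive_within_mult I_nondegenerate _ _ _ _ (D_derive j ltac:(lia)) (D_derive j ltac:(lia))))).
    - reflexivity.
    - intros y Hy.
      transitivity (2 * D (S j) y * (D (S (S j)) y + mu * D j y)); [ring|].
      rewrite Hvan by exact Hy. ring. }
  assert (HQx := derive_within_zero_const _ _ _ HQ x Hx). unfold Q in HQx.
  rewrite (proj2 (D_boundary j ltac:(lia))), (proj2 (D_boundary (S j) ltac:(lia))) in HQx.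
  assert (D j x * D j x <= 0) by nra. nra.
Qed.

Lemma energy_second_difference_pos mu j : 0 < mu -> (S (S j) <= n)%nat ->
  0 < energy (S (S j)) - 2 * mu * energy (S j) + mu ^ 2 * energy j.
Proof.
  intros Hmu Hj.
  assert (Hcomb : cont_within (-1) 1 (fun x => D (S (S j)) x + mu * D j x)).
  { apply (cont_within_plus I_nondegenerate); [|apply (cont_within_scal I_nondegenerate)];
      apply D_cont; lia. }
  assert (Hsq : RInt (fun x => (D (S (S j)) x + mu * D j x) * (D (S (S j)) x + mu * D j x)) (-1) 1
    = energy (S (S j)) - 2 * mu * energy (S j) + mu ^ 2 * energy j).
  { rewrite (RInt_ext _ (fun x => 1 * (1 * (D (S (S j)) x * D (S (S j)) x)
      + (2 * mu) * (D j x * D (S (S j)) x)) + mu ^ 2 * (D j x * D j x))) by (intros; ring_R).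
    assert (Hex : ex_RInt (fun x => 1 * (D (S (S j)) x * D (S (S j)) x)
      + (2 * mu) * (D j x * D (S (S j)) x)) (-1) 1).
    { apply (@ex_RInt_plus R_NormedModule); apply (@ex_RInt_scal R_NormedModule); apply ex_RInt_D_mult; lia. }
    rewrite (RInt_lincomb _ _ _ _ Hex), RInt_lincomb, (RInt_D_mult_shift j (S j));
      try (apply ex_RInt_D_mult); try lia.
    unfold energy. ring_R. }
  rewrite <- Hsq. apply (RInt_gt_0_cont_within I_nondegenerate).
  - apply (cont_within_mult I_nondegenerate); exact Hcomb.
  - intros x _. apply Rle_0_sqr.
  - intros Hvan. apply (D_combination_not_vanish mu j Hmu Hj). intros x Hx.
    destruct (Rmult_integral _ _ (Hvan x Hx)); assumption.
Qed.

Lemma energy_gap mu m : 0 < mu -> mu ^ p = Lam -> (1 <= p <= m)%nat -> (m < n)%nat ->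
  0 < (energy (S m) - Lam * energy (S m - p)) - mu * (energy m - Lam * energy (m - p)).
Proof.
  intros Hmu Hmup Hpm Hmn.
  set (u := fun j => energy (S j) - mu * energy j).
  assert (Hstep : forall j, (S j <= n - 1)%nat -> mu * u j < u (S j)).
  { intros j Hj. assert (H2 := energy_second_difference_pos mu j Hmu ltac:(lia)).
    unfold u. simpl in H2. lra. }
  assert (Hgrow := growth_iterate u mu (n - 1) Hmu Hstep p (m - p) ltac:(lia) ltac:(lia)).
  replace (m - p + p)%nat with m in Hgrow by lia.
  replace (S m - p)%nat with (S (m - p)) by lia.
  unfold u in Hgrow. rewrite Hmup in Hgrow. lra.
Qed.

Lemma hfun_m1_zero x : -1 <= x <= 1 -> hfun p n Lam D (-1) x = 0.
Proof.
  intros Hx. unfold hfun. replace (Z.of_nat n - -1 - 1)%Z with (Z.of_nat n) by lia.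
  rewrite Nat2Z.id, Lop_n_zero by exact Hx. ring.
Qed.

Lemma RiemannInt_z_hfun k m : Z.to_nat (Z.of_nat n - k - 1) = m -> (p <= m <= n)%nat ->
  exists pr : Riemann_integrable (fun x => z x * hfun p n Lam D k x) (-1) 1,
    powerRZ (-1) k * RiemannInt pr = energy m - Lam * energy (m - p).
Proof.
  intros Hkm Hm. unfold hfun. rewrite Hkm.
  assert (Hcont : cont_within (-1) 1 (fun x => z x * Lop p Lam D m x))
    by (apply (cont_within_mult I_nondegenerate); [apply z_cont|apply Lop_cont; lia]).
  assert (Hex : ex_RInt (fun x => z x * Lop p Lam D m x) (-1) 1)
    by (apply (ex_RInt_cont_within I_nondegenerate); auto; lra).
  assert (Hex' : ex_RInt (fun x => z x * (powerRZ (-1) k * Lop p Lam D m x)) (-1) 1).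
  { apply (ex_RInt_ext (fun x => powerRZ (-1) k * (z x * Lop p Lam D m x)));
      [intros; ring_R|apply (@ex_RInt_scal R_NormedModule), Hex]. }
  exists (ex_RInt_Reals_0 _ _ _ Hex'). rewrite <- RInt_Reals.
  rewrite (RInt_ext _ (fun x => powerRZ (-1) k * (z x * Lop p Lam D m x))) by (intros; ring_R).
  rewrite RInt_scal_R, RInt_z_Lop, <- Rmult_assoc, powerRZ_m1_sqr by assumption. ring.
Qed.

Lemma RiemannInt_z_sign mu c : 0 < mu -> mu ^ p = Lam -> (1 <= p < n)%nat ->
  (forall x, -1 <= x <= 1 -> Lop p Lam D (n - 1) x = c) ->
  exists pr : Riemann_integrable z (-1) 1, c * RiemannInt pr < 0.
Proof.
  intros Hmu Hmup Hp Hc.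
  assert (Hex : ex_RInt z (-1) 1)
    by (apply (ex_RInt_cont_within I_nondegenerate); try lra; apply z_cont).
  exists (ex_RInt_Reals_0 _ _ _ Hex). rewrite <- RInt_Reals.
  assert (Hgap := energy_gap mu (n - 1) Hmu Hmup ltac:(lia) ltac:(lia)).
  replace (S (n - 1)) with n in Hgap by lia.
  rewrite energy_balance, <- RInt_z_Lop in Hgap by lia.
  rewrite (RInt_ext _ (fun x => c * z x)), RInt_scal_R in Hgap by
    (try assumption; intros x Hx; rewrite Rmin_left, Rmax_right in Hx by lra;
     rewrite Hc by lra; ring_R).
  assert (0 < mu * - (c * RInt z (-1) 1)) by lra. nra.
Qed.

Section Even.

Hypothesis Heven : is_even_on_I z.

Lemma D_parity j : (j <= 2 * n)%nat -> forall x, -1 <= x <= 1 -> D j (- x) = (-1) ^ j * D j x.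
Proof.
  induction j as [|j IH]; intros Hj x Hx.
  - rewrite !D_0, Heven by exact Hx. ring.
  - assert (Hrefl := derive_within_reflect _ _ _ _ (D_derive j ltac:(lia))).
    replace (- 1) with (-1) in Hrefl by ring. replace (- -1) with 1 in Hrefl by ring.
    assert (Hsym : derive_within (-1) 1 (D j) (fun y => (-1) ^ j * - D (S j) (- y))).
    { apply (derive_within_ext _ _ _ _ (derive_within_scal I_nondegenerate ((-1) ^ j) _ _ Hrefl)).
      - intros y Hy. rewrite IH by (lia || lra). rewrite <- Rmult_assoc, pow_m1_sqr. ring.
      - reflexivity. }
    rewrite (derive_within_unique I_nondegenerate _ _ _ (- x) (D_derive j ltac:(lia)) Hsym)
      by lra.
    rewrite Ropp_involutive. simpl. ring.
Qed.

Lemma D_odd_at_0 i : (S (2 * i) <= 2 * n)%nat -> D (S (2 * i)) 0 = 0.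
Proof.
  intros Hi. assert (Hodd := D_parity (S (2 * i)) Hi 0 ltac:(lra)).
  rewrite Ropp_0, pow_1_odd in Hodd. lra.
Qed.

Lemma Lop_pred_const : (p < n)%nat ->
  forall x, -1 <= x <= 1 -> Lop p Lam D (n - 1) x = Lop p Lam D (n - 1) 1.
Proof.
  intros Hpn.
  assert (HdL : derive_within (-1) 1 (Lop p Lam (fun j => D (S j)) (n - 1)) (fun _ => 0)).
  { apply (derive_within_ext _ _ _ _ (derive_within_Lop _ _ p Lam (fun j => D (S j)) (n - 1)
      I_nondegenerate (D_derive (S (2 * (n - 1))) ltac:(lia))
      (D_derive (S (2 * (n - 1) - 2 * p)) ltac:(lia)))); [reflexivity|].
    intros y Hy. rewrite Lop_shift2 by lia. replace (S (n - 1)) with n by lia.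
    rewrite Lop_n_zero by exact Hy. ring. }
  (* the derivative of L^{2n-2} z is odd and constant, hence zero *)
  assert (HL : forall x, -1 <= x <= 1 -> Lop p Lam (fun j => D (S j)) (n - 1) x = 0).
  { intros x Hx. rewrite (derive_within_zero_const _ _ _ HdL x Hx).
    rewrite <- (derive_within_zero_const _ _ _ HdL 0) by lra.
    unfold Lop. replace (2 * (n - 1) - 2 * p)%nat with (2 * (n - 1 - p))%nat by lia.
    rewrite !D_odd_at_0 by lia. ring. }
  intros x Hx. apply (derive_within_zero_const (-1) 1); [|exact Hx].
  apply (derive_within_ext _ _ _ _ (derive_within_Lop _ _ p Lam D (n - 1)
    I_nondegenerate (D_derive (2 * (n - 1)) ltac:(lia)) (D_derive (2 * (n - 1) - 2 * p) ltac:(lia))));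
    [reflexivity|exact HL].
Qed.

Lemma hfun_0_const : (p < n)%nat ->
  exists c, forall x, -1 <= x <= 1 -> hfun p n Lam D 0 x = c.
Proof.
  intros Hpn. exists (Lop p Lam D (n - 1) 1). intros x Hx. unfold hfun.
  replace (Z.of_nat n - 0 - 1)%Z with (Z.of_nat (n - 1)) by lia.
  rewrite Nat2Z.id, powerRZ_O, Rmult_1_l. apply Lop_pred_const; assumption.
Qed.

End Even.

End Eigenfunction.

Theorem mainTheorem4 (p n : nat) (Lam : R) (z : R -> R) (D : nat -> R -> R) :
  (1 <= p)%nat -> (p < n)%nat ->
  eigen_with p n Lam z D -> is_even_on_I z ->
  0 < Lam /\
  (forall x, -1 <= x <= 1 -> hfun p n Lam D (-1) x = 0) /\
  (exists c, forall x, -1 <= x <= 1 -> hfun p n Lam D 0 x = c) /\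
  (forall k : Z, (0 <= k <= Z.of_nat n - Z.of_nat p - 1)%Z ->
     exists (pr1 : Riemann_integrable (fun x => z x * hfun p n Lam D (k - 1) x) (-1) 1)
            (pr2 : Riemann_integrable (fun x => z x * hfun p n Lam D k x) (-1) 1),
       powerRZ (-1) (k - 1) * RiemannInt pr1
         - powerRZ (-1) k * Rpower Lam (/ INR p) * RiemannInt pr2 > 0) /\
  (forall c : R, (forall x, -1 <= x <= 1 -> Lop p Lam D (n - 1) x = c) ->
     exists pr : Riemann_integrable z (-1) 1, c * RiemannInt pr < 0).
Proof.
  intros Hp Hpn Heig Heven.
  assert (HLam := Lam_pos p n Lam z D Heig ltac:(lia)).
  set (mu := Rpower Lam (/ INR p)).
  assert (Hmu : 0 < mu) by apply exp_pos.
  assert (Hmup : mu ^ p = Lam) by (apply Rpower_inv_INR_pow; [exact HLam|lia]).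
  split; [exact HLam|]. split; [apply (hfun_m1_zero p n Lam z D Heig)|].
  split; [apply (hfun_0_const p n Lam z D Heig Heven Hpn)|]. split.
  - intros k Hk. set (m := Z.to_nat (Z.of_nat n - k - 1)).
    assert (Hm : Z.of_nat m = (Z.of_nat n - k - 1)%Z) by (unfold m; lia).
    destruct (RiemannInt_z_hfun p n Lam z D Heig (k - 1) (S m)) as [pr1 E1]; [lia|lia|].
    destruct (RiemannInt_z_hfun p n Lam z D Heig k m) as [pr2 E2]; [lia|lia|].
    exists pr1, pr2.
    assert (Hgap := energy_gap p n Lam z D Heig mu m Hmu Hmup ltac:(lia) ltac:(lia)).
    fold mu. rewrite (Rmult_comm (powerRZ (-1) k) mu), Rmult_assoc, E1, E2. lra.
  - intros c. apply (RiemannInt_z_sign p n Lam z D Heig mu c Hmu Hmup). lia.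
Qed.
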